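(* Let $n=n_1n_2\cdots n_\ell>2$ with integers $n_i\ge 2$, and let $U=F_{(n_1,\dots,n_\ell)}=F_{n_1}\otimes\cdots\otimes F_{n_\ell}$ (with modes labelled as in the context). Consider the $n$-photon distillation protocol determined by $U$ with input state $\rho^{(n)}(\epsilon)$ (uniform random source model with any fixed $R\ge 1$, or its orthogonal-bad-bits limit). Then the output error rate satisfies $$e_n(\epsilon)=\frac{\epsilon}{n}+O(\epsilon^2)\qquad(\epsilon\to 0,\ n\text{ fixed}).$$ In particular this applies to $U=F_n$ ($n\ge 3$) and to $U=H_n=H^{\otimes r}$ ($n=2^r\ge 4$, $H$ the $2\times 2$ Hadamard matrix).
   Context: For an integer $m\ge 2$, $F_m=\frac{1}{\sqrt m}(\omega_m^{ij})_{0\le i,j\le m-1}$ with $\omega_m=e^{2\pi i/m}$; note $F_2=H$. The $n=n_1\cdots n_\ell$ modes of $F_{(n_1,\dots,n_\ell)}$ are labelled $0,\dots,n-1$ by identifying the basis vector $|m_1\rangle\otimes\cdots\otimes|m_\ell\rangle$ ($0\le m_i<n_i$) of $\mathbb{C}^{n_1}\otimes\cdots\otimes\mathbb{C}^{n_\ell}$ with mode $m_1+n_1m_2+n_1n_2m_3+\cdots+(n_1\cdots n_{\ell-1})m_\ell$. Photons: each photon has an external mode in $\{0,\dots,n-1\}$ and an internal state in a Hilbert space $\mathcal{H}_{\rm int}$ with fixed orthonormal basis $\{|\xi_0\rangle,|\xi_1\rangle,\dots\}$. $a_i^\dagger[\xi]$ creates a (bosonic) photon in mode $i$ with internal state $\xi$;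 $|\vec 0\rangle$ is the vacuum. For an $n\times n$ unitary $U$, the linear optical unitary $\hat U$ acts on the external modes only: $a_j^\dagger[\xi]\mapsto\sum_i U_{ij}a_i^\dagger[\xi]$. $|s_0,\dots,s_{n-1}\rangle$ denotes the Fock state (no internal degrees of freedom) with $s_i$ photons in mode $i$; $|1,\dots,1\rangle$ has one photon in each mode. Photon-number-resolving detection (PNRD) on a set of modes measures the number of photons in each of those modes, regardless of internal state. Ideal patterns of $U$: tuples $(s_0,\dots,s_{n-1})$ of nonnegative integers with $\sum s_i=n$, $s_0=1$ and $\langle s_0,\dots,s_{n-1}|\hat U|1,\dots,1\rangle\ne 0$. Distillation protocol for $U$ with input state $\sigma$ (a state of $n$ photons in $n$ distinct modes): apply $\hat U$; perform PNRD on modes $1,\dots,n-1$, getting $(s_1,\dots,s_{n-1})$; set $s_0=n-\sum_{j\ge1}s_j$; the protocol heralds success iff $(s_0,\dots,s_{n-1})$ is an ideal pattern. The heralding rate $h_n(\sigma)$ is the probability of success. The output error rate $e_n(\sigma)$ is the conditional probability, given success, that the single photon in mode $0$ has internal state $|\xi_i\rangle$ for some $i\ge1$ (computed via the projective measurement onto the normalized states $a^\dagger_{m_0}[\xi_{i_0}]\cdots a^\dagger_{m_{n-1}}[\xi_{i_{n-1}}]|\vec 0\rangle$). Input model: $\rho^{(n)}(\epsilon)$ is the mixture over states $a_0^\dagger[\xi_{j_0}]\cdots a_{n-1}^\dagger[\xi_{j_{n-1}}]|\vec0\rangle$ in which the photon in mode $i$ independently has internal state $\xi_0$ with probability $1-\epsilon$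 and otherwise an error state: in the uniform random source (URS) model with parameter $R\ge1$, each $\xi_j$, $1\le j\le R$, with probability $\epsilon/R$; in the orthogonal-bad-bits (OBB) limit, the photon in mode $i$ has state $\xi_{i+1}$ with probability $\epsilon$. Write $h_n(\epsilon)=h_n(\rho^{(n)}(\epsilon))$ and $e_n(\epsilon)=e_n(\rho^{(n)}(\epsilon))$. *)

From HB Require Import structures.
From mathcomp Require Import all_boot all_order all_algebra.
From mathcomp Require Import complex.
From mathcomp Require Import reals trigo.
Set Implicit Arguments. Unset Strict Implicit. Unset Printing Implicit Defensive.
Import Order.TTheory GRing.Theory Num.Theory.
Local Open Scope ring_scope.

Section Photonics.
Variable R : realType.
Local Notation C := (complex R).

Definition rC (x : R) : C := Complex x 0.
Definition normsq (z : C) : R := complex.Re z ^+ 2 + complex.Im z ^+ 2.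

Definition omega (m : nat) : C :=
  Complex (cos (2 * pi / m%:R)) (sin (2 * pi / m%:R)).

Definition fourier_entry (m i j : nat) : C :=
  omega m ^+ (i * j) / rC (Num.sqrt m%:R).

Definition fourier (m : nat) : 'M[C]_m :=
  \matrix_(i < m, j < m) fourier_entry m i j.

(* mixed-radix digits: mode a = m_1 + n_1 m_2 + n_1 n_2 m_3 + ... ;
   digit ns k a = m_{k+1} (0-based k) *)
Definition radix_prefix (ns : seq nat) (k : nat) : nat :=
  \prod_(j < k) nth 0%N ns j.
Definition digit (ns : seq nat) (k a : nat) : nat :=
  ((a %/ radix_prefix ns k) %% nth 0%N ns k)%N.

(* F_{(n_1,...,n_l)} = F_{n_1} (x) ... (x) F_{n_l}, with the mode labelling
   of the paper: the entry between |m_1..m_l> and |m'_1..m'_l> is the product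
   of the entries of the factors. *)
Definition fourier_tensor (ns : seq nat) : 'M[C]_(\prod_(m <- ns) m) :=
  \matrix_(a, b) \prod_(k < size ns)
     fourier_entry (nth 0%N ns k) (digit ns k a) (digit ns k b).

(* n modes, internal labels 'I_L (label 0 is xi_0).
   lab j = internal state of the input photon in mode j.
   A "path" sg : {ffun 'I_n -> 'I_n} sends input photon j to output mode sg j;
   expanding prod_j (sum_i U_ij a_i^dag[xi_{lab j}]) |0> gives
   sum_sg (prod_j U_{sg j, j}) prod_j a^dag_{sg j}[xi_{lab j}] |0>. *)
Definition config n L (lab : {ffun 'I_n -> 'I_L}) (sg : {ffun 'I_n -> 'I_n})
  : {ffun 'I_n * 'I_L -> nat} :=
  [ffun p => #|[set j | (sg j == p.1) && (lab j == p.2)]|].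

(* occupation configuration: occ (i, x) photons in mode i with internal state x *)
Definition occ_nat n L (occ : {ffun 'I_n * 'I_L -> 'I_n.+1})
  : {ffun 'I_n * 'I_L -> nat} := [ffun p => nat_of_ord (occ p)].

(* coefficient of prod a^dag |0> (unnormalized) in U^ (input state) *)
Definition amp n L (U : 'M[C]_n) (lab : {ffun 'I_n -> 'I_L})
  (occ : {ffun 'I_n * 'I_L -> 'I_n.+1}) : C :=
  \sum_(sg : {ffun 'I_n -> 'I_n} | config lab sg == occ_nat occ)
     \prod_(j < n) U (sg j) j.

(* probability of the projective outcome onto the normalized state
   prod a^dag |0> / sqrt(prod occ!) :  |amp|^2 * prod occ! *)
Definition outcome_prob n L (U : 'M[C]_n) (lab : {ffun 'I_n -> 'I_L})
  (occ : {ffun 'I_n * 'I_L -> 'I_n.+1}) : R :=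
  normsq (amp U lab occ) * (\prod_(p : 'I_n * 'I_L) (nat_of_ord (occ p))`!)%:R.

(* <s_0,...,s_{n-1}| U^ |1,...,1>  (no internal degrees of freedom) *)
Definition fock_amp n (U : 'M[C]_n) (s : 'I_n -> nat) : C :=
  (\sum_(sg : {ffun 'I_n -> 'I_n} | [forall i, #|[set j | sg j == i]| == s i])
     \prod_(j < n) U (sg j) j)
  * rC (Num.sqrt (\prod_(i < n) (s i)`!)%:R).

Definition ideal_pattern n (U : 'M[C]_n) (s : 'I_n -> nat) : bool :=
  [&& (\sum_(i < n) s i == n)%N,
      [forall i : 'I_n, (nat_of_ord i == 0)%N ==> (s i == 1)%N]
    & fock_amp U s != 0].

Definition mode_count n L (occ : {ffun 'I_n * 'I_L -> 'I_n.+1}) (i : 'I_n) : nat :=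
  (\sum_(x < L) nat_of_ord (occ (i, x)))%N.

(* PNRD on modes 1..n-1, and s_0 := n - sum_{j>=1} s_j *)
Definition heralded_pattern n L (occ : {ffun 'I_n * 'I_L -> 'I_n.+1}) : 'I_n -> nat :=
  fun i => if (nat_of_ord i == 0)%N
           then (n - \sum_(j < n | nat_of_ord j != 0%N) mode_count occ j)%N
           else mode_count occ i.

Definition success n L (U : 'M[C]_n) (occ : {ffun 'I_n * 'I_L -> 'I_n.+1}) : bool :=
  ideal_pattern U (heralded_pattern occ).

Definition mode0_error n L (occ : {ffun 'I_n * 'I_L -> 'I_n.+1}) : bool :=
  [exists p : 'I_n * 'I_L,
     [&& nat_of_ord p.1 == 0%N, nat_of_ord p.2 != 0%N & (0 < occ p)%N]].

(* input: photon in mode i independently has internal state x with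
   probability pl i x *)
Definition input_weight n L (pl : 'I_n -> 'I_L -> R) (lab : {ffun 'I_n -> 'I_L}) : R :=
  \prod_(i < n) pl i (lab i).

Definition heralding_rate n L (U : 'M[C]_n) (pl : 'I_n -> 'I_L -> R) : R :=
  \sum_(lab : {ffun 'I_n -> 'I_L}) input_weight pl lab *
    \sum_(occ : {ffun 'I_n * 'I_L -> 'I_n.+1} | success U occ) outcome_prob U lab occ.

Definition success_and_error n L (U : 'M[C]_n) (pl : 'I_n -> 'I_L -> R) : R :=
  \sum_(lab : {ffun 'I_n -> 'I_L}) input_weight pl lab *
    \sum_(occ : {ffun 'I_n * 'I_L -> 'I_n.+1} | success U occ && mode0_error occ)
       outcome_prob U lab occ.

Definition error_rate n L (U : 'M[C]_n) (pl : 'I_n -> 'I_L -> R) : R :=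
  success_and_error U pl / heralding_rate U pl.

Definition urs_dist n (Rp : nat) (eps : R) : 'I_n -> 'I_Rp.+1 -> R :=
  fun _ x => if (nat_of_ord x == 0)%N then 1 - eps else eps / Rp%:R.

Definition obb_dist n (eps : R) : 'I_n -> 'I_n.+1 -> R :=
  fun i x => if (nat_of_ord x == 0)%N then 1 - eps
             else if (nat_of_ord x == (nat_of_ord i).+1)%N then eps else 0.

End Photonics.
Arguments urs_dist {R n} Rp eps _ _.
Arguments obb_dist {R n} eps _ _.

From HB Require Import structures.
From mathcomp Require Import all_boot all_order all_algebra.
From mathcomp Require Import complex.
From mathcomp Require Import reals trigo.
From mathcomp Require Import ring lra zify.
From mathcomp Require Import fingroup perm.
Set Implicit Arguments. Unset Strict Implicit. Unset Printing Implicit Defensive.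
Import Order.TTheory GRing.Theory Num.Theory.
Local Open Scope complex_scope.
Local Open Scope ring_scope.

(* Expanding the output state over the ways of routing the n input photons to
   output modes, only inputs with at most one bad photon matter to first order
   in eps.  The all-ideal input never reports an error and succeeds with weight
   b0 = sum_s |P(s)|^2 prod_k s_k!, where P(s) is the amplitude of the ideal
   pattern s.  If only the photon entering mode i is bad, an error is reported
   exactly when that photon is routed to mode 0, with weight
   alpha_i = sum_s |Q_i(s)|^2 prod_k s_k!.  Inputs with two or more bad photons
   have weight O(eps^2), so e_n = eps (sum_i alpha_i) / b0 + O(eps^2).
   For U = F_{n_1} (x) ... (x) F_{n_l}, translating the modes by an element of
   Z/n_1 x ... x Z/n_l permutes the columns of U up to a phase on each row.
   Hence Q_i(s) = Q_0(s) whenever P(s) != 0, and since an ideal pattern has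
   s_0 = 1, P(s) = sum_i Q_i(s) = n Q_0(s), i.e. b0 = n sum_i alpha_i.
   Finally b0 > 0: as row 0 of U is constant, equal to c = n^(-1/2), and every
   column but the first sums to 0, the total amplitude of the routings sending
   exactly one photon to mode 0 is a sum of n products over the columns, which
   evaluates to (-1)^n c^n n (n - 2) != 0. *)

Section RootsOfUnity.
Variable R : realType.

Lemma omega_expr m k : omega R m ^+ k =
  Complex (cos (k%:R * (2 * pi / m%:R))) (sin (k%:R * (2 * pi / m%:R))).
Proof.
have mulE (a b c d : R) :
  Complex a b * Complex c d = Complex (a * c - b * d) (a * d + b * c) by [].
elim: k => [|k IH]; first by rewrite expr0 mul0r cos0 sin0.
rewrite exprSr IH /omega mulE; set t := 2 * pi / m%:R.
rewrite -[k.+1%:R]natr1 mulrDl mul1r cosD sinD.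
by rewrite [X in _ +i* X = _]addrC.
Qed.

Lemma omega_exprn m : (0 < m)%N -> omega R m ^+ m = 1.
Proof.
move=> m_gt0; rewrite omega_expr mulrCA divff ?pnatr_eq0 -?lt0n // mulr1.
by rewrite mulr_natl cos2pi sin2pi.
Qed.

Lemma omega_expr_mod m k : (0 < m)%N -> omega R m ^+ k = omega R m ^+ (k %% m).
Proof.
move=> m_gt0; rewrite {1}(divn_eq k m) exprD mulnC exprM.
by rewrite omega_exprn // expr1n mul1r.
Qed.

Lemma omega_expr_neq1 m r : (0 < r < m)%N -> omega R m ^+ r != 1.
Proof.
case/andP => r_gt0 r_lt_m; have m_gt0 : (0 < m)%N by apply: leq_trans r_lt_m.
rewrite omega_expr; apply/eqP => -[cos1 sin0].
set t := r%:R * (2 * pi / m%:R) in cos1 sin0.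
have t_gt0 : 0 < t.
  by rewrite mulr_gt0 ?ltr0n // divr_gt0 ?ltr0n // mulr_gt0 // pi_gt0.
have t_lt2pi : t < pi *+ 2.
  have -> : t = (r%:R / m%:R) * (pi *+ 2).
    by rewrite /t -mulr_natl; field; rewrite pnatr_eq0 -lt0n.
  have pi2_gt0 : 0 < (pi : R) *+ 2 by rewrite -mulr_natl mulr_gt0 ?ltr0n ?pi_gt0.
  by rewrite mulrC -[X in _ < X]mulr1 ltr_pM2l // ltr_pdivrMr ?ltr0n // mul1r ltr_nat.
have [t_lt_pi|pi_lt_t|t_pi] := ltrgtP t pi.
- have : 0 < t < pi by rewrite t_gt0 t_lt_pi.
  by move/sin_gt0_pi; rewrite sin0 ltxx.
- have : 0 < t - pi < pi by rewrite subr_gt0 pi_lt_t /= ltrBlDr -mulr2n.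
  move/sin_gt0_pi; have := sinDpi (t - pi).
  by rewrite subrK sin0 => /eqP; rewrite eq_sym oppr_eq0 => /eqP ->; rewrite ltxx.
- by move: cos1; rewrite t_pi cospi; lra.
Qed.

Lemma sum_omega_expr m r : (0 < r < m)%N -> \sum_(t < m) omega R m ^+ (t * r) = 0.
Proof.
move=> r_range; have m_gt0 : (0 < m)%N by case/andP: r_range => ? /(leq_trans _) ->.
have := subrX1 (omega R m ^+ r) m.
rewrite -exprM mulnC exprM omega_exprn // expr1n subrr => /esym/eqP.
rewrite mulf_eq0 subr_eq0 (negbTE (omega_expr_neq1 r_range)) /= => /eqP geom.
by rewrite -[RHS]geom; apply: eq_bigr => t _; rewrite mulnC exprM.
Qed.

End RootsOfUnity.

Section FourierTensor.
Variable R : realType.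
Local Notation C := (complex R).
Local Notation fe := (fourier_entry R).

Definition modes (ns : seq nat) : nat := \prod_(m <- ns) m.

Lemma modes_nil : modes [::] = 1%N.
Proof. exact: big_nil. Qed.

Lemma modes_cons m ns : modes (m :: ns) = (m * modes ns)%N.
Proof. exact: big_cons. Qed.

Lemma rC_sqrt_neq0 m : (0 < m)%N -> rC (Num.sqrt (m%:R : R)) != 0.
Proof.
by move=> m_gt0; rewrite (fmorph_eq0 (real_complex R)) sqrtr_eq0 -ltNge ltr0n.
Qed.

Lemma fourier_entry0l m j : fe m 0 j = (rC (Num.sqrt (m%:R : R)))^-1.
Proof. by rewrite /fourier_entry mul0n expr0 div1r. Qed.

Lemma fourier_entry_shift m a j g : (0 < m)%N ->
  fe m a ((j + g) %% m) = fe m a j * omega R m ^+ (a * g).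
Proof.
move=> m_gt0; rewrite /fourier_entry omega_expr_mod // modnMmr -omega_expr_mod //.
by rewrite mulnDr exprD mulrAC.
Qed.

Lemma sum_fourier_entry m r : (0 < m)%N -> (r < m)%N ->
  \sum_(t < m) fe m t r = if r == 0%N then m%:R / rC (Num.sqrt (m%:R : R)) else 0.
Proof.
move=> m_gt0 r_lt_m; rewrite /fourier_entry -mulr_suml.
case: eqP => [->|/eqP r_neq0]; last by rewrite sum_omega_expr ?mul0r // lt0n r_neq0.
by under eq_bigr do rewrite muln0 expr0; rewrite sumr_const card_ord.
Qed.

Lemma digit_cons0 m ns a : digit (m :: ns) 0 a = (a %% m)%N.
Proof. by rewrite /digit /radix_prefix big_ord0 divn1. Qed.

Lemma digit_consS m ns k a : digit (m :: ns) k.+1 a = digit ns k (a %/ m).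
Proof. by rewrite /digit /radix_prefix big_ord_recl /= divnMA. Qed.

Definition tensor_entry (ns : seq nat) (a b : nat) : C :=
  \prod_(k < size ns) fe (nth 0%N ns k) (digit ns k a) (digit ns k b).

Lemma fourier_tensorE ns (a b : 'I_(modes ns)) :
  fourier_tensor R ns a b = tensor_entry ns a b.
Proof. exact: mxE. Qed.

Lemma tensor_entry_nil a b : tensor_entry [::] a b = 1.
Proof. by rewrite /tensor_entry big_ord0. Qed.

Lemma tensor_entry_cons m ns a b :
  tensor_entry (m :: ns) a b = fe m (a %% m) (b %% m) * tensor_entry ns (a %/ m) (b %/ m).
Proof.
rewrite /tensor_entry big_ord_recl /= !digit_cons0; congr (_ * _).
by apply: eq_bigr => k _; rewrite !digit_consS.
Qed.

Definition row0_entry (ns : seq nat) : C :=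
  \prod_(m <- ns) (rC (Num.sqrt (m%:R : R)))^-1.

Lemma tensor_entry_row0 ns b : tensor_entry ns 0 b = row0_entry ns.
Proof.
elim: ns b => [|m ns IH] b; first by rewrite tensor_entry_nil /row0_entry big_nil.
by rewrite tensor_entry_cons mod0n div0n fourier_entry0l IH /row0_entry big_cons.
Qed.

Lemma row0_entry_neq0 ns : all (fun m => 0 < m)%N ns -> row0_entry ns != 0.
Proof.
elim: ns => [|m ns IH] /=; first by rewrite /row0_entry big_nil oner_eq0.
case/andP=> m_gt0 /IH ns_neq0.
by rewrite /row0_entry big_cons mulf_neq0 // invr_eq0 rC_sqrt_neq0.
Qed.

Lemma sum_ord_mul (V : nmodType) (F : nat -> V) m k :
  \sum_(a < m * k) F a = \sum_(u < k) \sum_(t < m) F (t + m * u)%N.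
Proof.
elim: k => [|k IH]; first by rewrite muln0 !big_ord0.
rewrite mulnSr big_split_ord /= IH big_ord_recr /=; congr (_ + _).
by apply: eq_bigr => t _; rewrite addnC.
Qed.

Lemma sum_tensor_entry ns j : all (fun m => 0 < m)%N ns -> (j < modes ns)%N ->
  \sum_(a < modes ns) tensor_entry ns a j =
    if j == 0%N then (modes ns)%:R * row0_entry ns else 0.
Proof.
elim: ns j => [|m ns IH] j /=.
  rewrite modes_nil => _; rewrite ltnS leqn0 => /eqP ->.
  by rewrite big_ord1 tensor_entry_nil /row0_entry big_nil mulr1.
case/andP=> m_gt0 ns_gt0; rewrite modes_cons => j_lt.
have jm_lt : (j %/ m < modes ns)%N by rewrite ltn_divLR // mulnC.
have entry_split (u : 'I_(modes ns)) (t : 'I_m) : tensor_entry (m :: ns) (t + m * u) j =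
    fe m t (j %% m) * tensor_entry ns u (j %/ m).
  rewrite tensor_entry_cons addnC mulnC modnMDl divnMDl // modn_small //.
  by rewrite divn_small // addn0.
rewrite (sum_ord_mul (fun a => tensor_entry (m :: ns) a j)).
under eq_bigr do under eq_bigr do rewrite entry_split.
under eq_bigr do rewrite -mulr_suml.
rewrite -mulr_sumr sum_fourier_entry ?ltn_pmod // IH //.
have -> : (j == 0%N) = (j %% m == 0)%N && (j %/ m == 0)%N.
  apply/eqP/andP => [->|[/eqP j_mod /eqP j_div]]; first by rewrite mod0n div0n.
  by rewrite (divn_eq j m) j_mod j_div.
case: (j %% m == 0)%N; case: (j %/ m == 0)%N; rewrite ?mul0r ?mulr0 //.
by rewrite /row0_entry big_cons natrM; ring.
Qed.

Fixpoint radix_add (ns : seq nat) (g j : nat) : nat :=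
  match ns with
  | [::] => 0%N
  | m :: ns' => ((j %% m + g %% m) %% m + m * radix_add ns' (g %/ m) (j %/ m))%N
  end.

Fixpoint radix_char (ns : seq nat) (g a : nat) : C :=
  match ns with
  | [::] => 1
  | m :: ns' => omega R m ^+ ((a %% m) * (g %% m)) * radix_char ns' (g %/ m) (a %/ m)
  end.

Lemma radix_add_lt ns g j : all (fun m => 0 < m)%N ns -> (radix_add ns g j < modes ns)%N.
Proof.
elim: ns g j => [|m ns IH] g j /=; first by rewrite modes_nil.
case/andP=> m_gt0 ns_gt0; rewrite modes_cons.
have low_lt : ((j %% m + g %% m) %% m < m)%N by rewrite ltn_pmod.
apply: (@leq_trans (m * (radix_add ns (g %/ m) (j %/ m)).+1)%N).
  by rewrite mulnS ltn_add2r.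
by rewrite leq_mul2l IH ?orbT.
Qed.

Lemma radix_add_cons m ns g j : (0 < m)%N ->
  (radix_add (m :: ns) g j %% m = (j %% m + g %% m) %% m)%N /\
  (radix_add (m :: ns) g j %/ m = radix_add ns (g %/ m) (j %/ m))%N.
Proof.
move=> m_gt0; have low_lt : ((j %% m + g %% m) %% m < m)%N := ltn_pmod _ m_gt0.
rewrite /= [(_ + m * _)%N]addnC [(m * _)%N]mulnC modnMDl modn_small //.
by rewrite divnMDl // (divn_small low_lt) addn0.
Qed.

Lemma radix_add_inj ns g j j' : all (fun m => 0 < m)%N ns ->
  (j < modes ns)%N -> (j' < modes ns)%N -> radix_add ns g j = radix_add ns g j' -> j = j'.
Proof.
elim: ns g j j' => [|m ns IH] g j j'.
  by rewrite modes_nil !ltnS !leqn0 => _ /eqP -> /eqP ->.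
case/andP=> m_gt0 ns_gt0; rewrite modes_cons => j_lt j'_lt eq_add.
have [mod_j div_j] := radix_add_cons ns g j m_gt0.
have [mod_j' div_j'] := radix_add_cons ns g j' m_gt0.
have eq_mod : (j %% m = j' %% m)%N.
  have : (j %% m + g %% m == j' %% m + g %% m %[mod m])%N.
    by rewrite -mod_j -mod_j' eq_add.
  by rewrite eqn_modDr !modn_mod => /eqP.
have eq_div : (j %/ m = j' %/ m)%N.
  by apply: (IH (g %/ m)%N); rewrite ?ltn_divLR 1?mulnC // -div_j -div_j' eq_add.
by rewrite (divn_eq j m) (divn_eq j' m) eq_mod eq_div.
Qed.

Lemma radix_add0 ns g : all (fun m => 0 < m)%N ns -> (g < modes ns)%N -> radix_add ns g 0 = g.
Proof.
elim: ns g => [|m ns IH] g /=; first by rewrite modes_nil ltnS leqn0 => _ /eqP ->.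
case/andP=> m_gt0 ns_gt0; rewrite modes_cons => g_lt.
rewrite mod0n add0n modn_mod div0n IH //; last by rewrite ltn_divLR // mulnC.
by rewrite addnC mulnC -divn_eq.
Qed.

Lemma tensor_entry_radix_add ns g a j : all (fun m => 0 < m)%N ns ->
  tensor_entry ns a (radix_add ns g j) = tensor_entry ns a j * radix_char ns g a.
Proof.
elim: ns g a j => [|m ns IH] g a j /=; first by rewrite !tensor_entry_nil mulr1.
case/andP=> m_gt0 ns_gt0; have [mod_add div_add] := radix_add_cons ns g j m_gt0.
rewrite tensor_entry_cons mod_add div_add IH // fourier_entry_shift // tensor_entry_cons.
by rewrite mulrACA.
Qed.

End FourierTensor.

Lemma big_neq0_exists (V : nmodType) (I : finType) (P : pred I) (F : I -> V) :
  \sum_(i | P i) F i != 0 -> exists2 i, P i & F i != 0.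
Proof.
move=> sum_neq0; apply/exists_inP; apply: contraNT sum_neq0 => /exists_inPn F0.
by apply/eqP/big1 => i /F0 /negPn /eqP.
Qed.

Lemma card_set_sum (T : finType) (P : pred T) : #|[set j | P j]| = (\sum_j P j)%N.
Proof. by rewrite -sum1dep_card big_mkcond. Qed.

Lemma normsq_ge0 (R : realType) (z : complex R) : 0 <= normsq z.
Proof. by rewrite /normsq addr_ge0 // sqr_ge0. Qed.

Lemma normsq_complex (R : realType) (z : complex R) : (normsq z)%:C = `|z| ^+ 2.
Proof. exact: add_Re2_Im2. Qed.

Lemma normsq_eq0 (R : realType) (z : complex R) : (normsq z == 0) = (z == 0).
Proof.
apply/idP/idP => [/eqP z_sq0|/eqP ->]; last by rewrite /normsq /= expr0n /= addr0.
have : `|z| ^+ 2 = 0 by rewrite -normsq_complex z_sq0.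
by move/eqP; rewrite expf_eq0 /= normr_eq0.
Qed.

Lemma normsq0 (R : realType) : normsq (0 : complex R) = 0.
Proof. by apply/eqP; rewrite normsq_eq0. Qed.

Lemma normsqM (R : realType) (x y : complex R) : normsq (x * y) = normsq x * normsq y.
Proof. by apply: complexI; rewrite rmorphM /= !normsq_complex normrM exprMn. Qed.

Lemma normsq_natr (R : realType) (k : nat) : normsq (k%:R : complex R) = k%:R ^+ 2.
Proof. by rewrite -(rmorph_nat (real_complex R)) /normsq /= expr0n /= addr0. Qed.

Section Routing.
Variable R : realType.
Local Notation C := (complex R).
Variables (n : nat) (U : 'M[C]_n) (z0 : 'I_n).
Hypothesis z0E : nat_of_ord z0 = 0%N.

Local Notation routeT := {ffun 'I_n -> 'I_n}.
Local Notation patternT := {ffun 'I_n -> 'I_n.+1}.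

Definition route_amp (sg : routeT) : C := \prod_(j < n) U (sg j) j.

Definition occupancy (sg : routeT) (i : 'I_n) : nat := #|[set j | sg j == i]|.

Definition pattern_amp (s : 'I_n -> nat) : C :=
  \sum_(sg : routeT | [forall i, occupancy sg i == s i]) route_amp sg.

Definition pattern_amp_from (i : 'I_n) (s : 'I_n -> nat) : C :=
  \sum_(sg : routeT | [forall a, occupancy sg a == s a] && (sg i == z0)) route_amp sg.

Definition pattern_of (s : patternT) : 'I_n -> nat := fun i => s i.

Definition pattern_fact (s : 'I_n -> nat) : nat := \prod_(a < n) (s a)`!.

Lemma val_eq0 (j : 'I_n) : (nat_of_ord j == 0%N) = (j == z0).
Proof. by rewrite -z0E. Qed.

Lemma n_gt0 : (0 < n)%N.
Proof. by case: n z0 => [[]|]. Qed.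

Lemma sum_occupancy (sg : routeT) : (\sum_(a < n) occupancy sg a)%N = n.
Proof.
rewrite /occupancy; under eq_bigr do rewrite card_set_sum.
rewrite exchange_big /= -[RHS]card_ord -sum1_card.
apply: eq_bigr => j _; rewrite (bigD1 (sg j)) //= eqxx big1 ?addn0 //.
by move=> a /negbTE; rewrite eq_sym => ->.
Qed.

Lemma occupancy_le (sg : routeT) a : (occupancy sg a <= n)%N.
Proof. by rewrite /occupancy -[X in (_ <= X)%N]card_ord max_card. Qed.

Lemma fock_ampE (s : 'I_n -> nat) :
  fock_amp U s = pattern_amp s * rC (Num.sqrt (pattern_fact s)%:R).
Proof. by []. Qed.

Lemma ideal_pattern_ext f g : f =1 g -> ideal_pattern U f = ideal_pattern U g.
Proof. by move/boolp.funext ->. Qed.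

Lemma ideal_pattern_mode0 (f : 'I_n -> nat) : ideal_pattern U f -> f z0 = 1%N.
Proof. by case/and3P => _ /forallP /(_ z0); rewrite val_eq0 eqxx => /eqP. Qed.

Lemma ideal_pattern_amp_neq0 (f : 'I_n -> nat) : ideal_pattern U f -> pattern_amp f != 0.
Proof. by case/and3P => _ _; rewrite fock_ampE; apply: contra => /eqP ->; rewrite mul0r. Qed.

Lemma ideal_patternP (f : 'I_n -> nat) :
  (\sum_(a < n) f a)%N = n -> f z0 = 1%N -> pattern_amp f != 0 -> ideal_pattern U f.
Proof.
move=> f_sum f_z0 f_amp; apply/and3P; split; first by rewrite f_sum.
  by apply/forallP => i; apply/implyP; rewrite val_eq0 => /eqP ->; rewrite f_z0.
rewrite fock_ampE mulf_neq0 // rC_sqrt_neq0 // prodn_gt0 // => i.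
exact: fact_gt0.
Qed.

Lemma sum_pattern_route (s : 'I_n -> nat) (sg : routeT) :
  (forall a, occupancy sg a = s a) -> (\sum_(a < n) s a)%N = n.
Proof. by move=> occ_s; rewrite -[RHS](sum_occupancy sg); apply: eq_bigr. Qed.

Lemma pattern_amp_sum (s : 'I_n -> nat) : pattern_amp s != 0 -> (\sum_(a < n) s a)%N = n.
Proof.
case/big_neq0_exists => sg /forallP occ_s _.
by apply: (@sum_pattern_route _ sg) => a; apply/eqP.
Qed.

Variable l : nat.
Local Notation occT := {ffun 'I_n * 'I_l.+1 -> 'I_n.+1}.
Local Notation labT := {ffun 'I_n -> 'I_l.+1}.

Lemma amp_neq0_route (lab : labT) (occ : occT) : amp U lab occ != 0 ->
  exists sg, config lab sg = occ_nat occ.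
Proof. by case/big_neq0_exists => sg /eqP; exists sg. Qed.

Lemma occ_config (lab : labT) (sg : routeT) (occ : occT) :
  config lab sg = occ_nat occ -> forall p, nat_of_ord (occ p) = config lab sg p.
Proof. by move=> occ_sg p; rewrite occ_sg ffunE. Qed.

Lemma mode_count_config (lab : labT) (sg : routeT) (occ : occT) :
  config lab sg = occ_nat occ -> forall a, mode_count occ a = occupancy sg a.
Proof.
move=> occ_sg a; rewrite /mode_count.
have -> : (\sum_(x < l.+1) occ (a, x) = \sum_(x < l.+1) occ_nat occ (a, x))%N.
  by apply: eq_bigr => x _; rewrite ffunE.
rewrite -occ_sg /occupancy; under eq_bigr do rewrite ffunE /= card_set_sum.
rewrite exchange_big card_set_sum /=; apply: eq_bigr => j _.
case: (sg j == a) => /=; last by rewrite big1.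
by rewrite (bigD1 (lab j)) //= eqxx big1 ?addn0 // => x /negbTE; rewrite eq_sym => ->.
Qed.

Lemma success_pattern (occ : occT) (s : 'I_n -> nat) :
  (forall a, mode_count occ a = s a) -> (\sum_(a < n) s a)%N = n ->
  success U occ = ideal_pattern U s.
Proof.
move=> count_s s_sum; apply: ideal_pattern_ext => i; rewrite /heralded_pattern val_eq0.
case: eqP => [->|_]; last exact: count_s.
under eq_bigl do rewrite val_eq0.
under eq_bigr do rewrite count_s.
by rewrite -{1}s_sum (bigD1 z0) //= addnK.
Qed.

Lemma success_route (lab : labT) (sg : routeT) (occ : occT) :
  config lab sg = occ_nat occ -> success U occ = ideal_pattern U (occupancy sg).
Proof.
move=> occ_sg; apply: success_pattern; first exact: mode_count_config occ_sg.
exact: sum_occupancy.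
Qed.

Lemma outcome_prob_ge0 (lab : labT) (occ : occT) : 0 <= outcome_prob U lab occ.
Proof. by rewrite /outcome_prob mulr_ge0 ?normsq_ge0 ?ler0n. Qed.

Lemma outcome_prob_amp0 (lab : labT) (occ : occT) :
  amp U lab occ = 0 -> outcome_prob U lab occ = 0.
Proof. by rewrite /outcome_prob => ->; rewrite normsq0 mul0r. Qed.

Lemma prod_pair_fact (F : 'I_n * 'I_l.+1 -> nat) :
  (\prod_(p : 'I_n * 'I_l.+1) (F p)`! = \prod_(a < n) \prod_(y < l.+1) (F (a, y))`!)%N.
Proof. by rewrite pair_bigA; apply: eq_bigr => -[]. Qed.

End Routing.

Lemma big_retract (V : nmodType) (S T : finType) (e : S -> T) (p : T -> S) (F : T -> V) :
  (forall t, e (p t) != t -> F t = 0) -> \sum_t F t = \sum_(s | p (e s) == s) F (e s).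
Proof.
move=> F_out; rewrite (bigID (fun t => e (p t) == t)) /= [X in _ + X]big1 ?addr0 //.
rewrite (reindex_onto e p) => [|t /eqP //]; apply: eq_bigl => s.
by case: (eqVneq (p (e s)) s) => [-> | _]; rewrite ?eqxx ?andbF.
Qed.

Section IdealInput.
Variable R : realType.
Local Notation C := (complex R).
Variables (n : nat) (U : 'M[C]_n) (z0 : 'I_n).
Hypothesis z0E : nat_of_ord z0 = 0%N.
Variable l : nat.
Local Notation routeT := {ffun 'I_n -> 'I_n}.
Local Notation patternT := {ffun 'I_n -> 'I_n.+1}.
Local Notation occT := {ffun 'I_n * 'I_l.+1 -> 'I_n.+1}.
Local Notation labT := {ffun 'I_n -> 'I_l.+1}.

Definition ideal_lab : labT := [ffun _ => ord0].

Definition ideal_occ (s : patternT) : occT :=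
  [ffun p => if p.2 == ord0 then s p.1 else ord0].

Definition ideal_part (occ : occT) : patternT := [ffun a => occ (a, ord0)].

Lemma ideal_occK : cancel ideal_occ ideal_part.
Proof. by move=> s; apply/ffunP => a; rewrite !ffunE /= ?eqxx. Qed.

Lemma config_ideal_lab (sg : routeT) (p : 'I_n * 'I_l.+1) :
  config ideal_lab sg p = if p.2 == ord0 then occupancy sg p.1 else 0%N.
Proof.
rewrite ffunE /occupancy; case: p => a y /=; case: eqP => [->|/eqP y_neq0].
  by apply: eq_card => j; rewrite !inE ffunE eqxx andbT.
apply/eqP; rewrite cards_eq0; apply/eqP/setP => j; rewrite !inE ffunE.
by rewrite [ord0 == y]eq_sym (negbTE y_neq0) andbF.
Qed.

Lemma amp_ideal_lab_out (occ : occT) :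
  ideal_occ (ideal_part occ) != occ -> amp U ideal_lab occ = 0.
Proof.
move=> occ_out; apply/eqP; apply: contraR occ_out => /amp_neq0_route [sg occ_sg].
apply/eqP/ffunP => -[a y]; rewrite !ffunE /=; case: eqP => [->//|/eqP y_neq0].
by apply: ord_inj; rewrite (occ_config occ_sg) config_ideal_lab /= (negbTE y_neq0).
Qed.

Lemma amp_ideal_lab_occ (s : patternT) :
  amp U ideal_lab (ideal_occ s) = pattern_amp U (pattern_of s).
Proof.
apply: eq_bigl => sg; apply/eqP/forallP => [occ_sg i|occ_s].
  apply/eqP; have /ffunP/(_ (i, ord0)) := occ_sg.
  by rewrite /= config_ideal_lab /= ?eqxx !ffunE /= ?eqxx => ->.
apply/ffunP => -[a y]; rewrite config_ideal_lab !ffunE /=.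
by case: (y == ord0) => //; apply/eqP; apply: occ_s.
Qed.

Lemma pattern_fact_ideal_occ (s : patternT) :
  (\prod_(p : 'I_n * 'I_l.+1) (ideal_occ s p : nat)`!)%N = pattern_fact (pattern_of s).
Proof.
rewrite prod_pair_fact; apply: eq_bigr => a _.
by rewrite big_ord_recl ffunE /= ?eqxx big1 ?muln1 // => y _; rewrite ffunE.
Qed.

Lemma mode_count_ideal_occ (s : patternT) a : mode_count (ideal_occ s) a = s a.
Proof.
by rewrite /mode_count big_ord_recl ffunE /= ?eqxx big1 ?addn0 // => y _; rewrite ffunE.
Qed.

Lemma success_weight_ideal :
  \sum_(occ : occT | success U occ) outcome_prob U ideal_lab occ =
  \sum_(s : patternT | ideal_pattern U (pattern_of s))
    normsq (pattern_amp U (pattern_of s)) * (pattern_fact (pattern_of s))%:R.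
Proof.
rewrite big_mkcond (big_retract (e := ideal_occ) (p := ideal_part)); last first.
  by move=> occ /amp_ideal_lab_out amp0; rewrite outcome_prob_amp0 ?if_same.
rewrite [RHS]big_mkcond; apply: eq_big => [s|s _]; first by rewrite ideal_occK eqxx.
rewrite /outcome_prob amp_ideal_lab_occ pattern_fact_ideal_occ.
have [->|amp_neq0] := eqVneq (pattern_amp U (pattern_of s)) 0.
  by rewrite normsq0 mul0r !if_same.
by rewrite (success_pattern U z0E (mode_count_ideal_occ s) (pattern_amp_sum amp_neq0)).
Qed.

Lemma error_weight_ideal :
  \sum_(occ : occT | success U occ && mode0_error occ) outcome_prob U ideal_lab occ = 0.
Proof.
apply: big1 => occ /andP [_ /existsP [[a y] /and3P [_ y_val occ_pos]]].
have [|/amp_neq0_route [sg occ_sg]] := eqVneq (amp U ideal_lab occ) 0.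
  exact: outcome_prob_amp0.
have y_neq0 : y != ord0 := y_val.
by move: occ_pos; rewrite (occ_config occ_sg) config_ideal_lab /= (negbTE y_neq0).
Qed.

End IdealInput.

Section SingleErrorInput.
Variable R : realType.
Local Notation C := (complex R).
Variables (n : nat) (U : 'M[C]_n) (z0 : 'I_n).
Hypothesis z0E : nat_of_ord z0 = 0%N.
Variable l : nat.
Local Notation routeT := {ffun 'I_n -> 'I_n}.
Local Notation patternT := {ffun 'I_n -> 'I_n.+1}.
Local Notation occT := {ffun 'I_n * 'I_l.+1 -> 'I_n.+1}.
Local Notation labT := {ffun 'I_n -> 'I_l.+1}.

Variables (i : 'I_n) (x : 'I_l.+1).
Hypothesis x_neq0 : x != ord0.

Definition single_lab : labT := [ffun j => if j == i then x else ord0].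

Lemma occupancy_others (sg : routeT) a :
  #|[set j | (sg j == a) && (j != i)]| = (occupancy sg a - (sg i == a))%N.
Proof.
rewrite /occupancy [in RHS](cardD1 i) inE addKn; apply: eq_card => j.
by rewrite !inE andbC.
Qed.

Lemma config_single_lab (sg : routeT) a y : config single_lab sg (a, y) =
  if y == ord0 then #|[set j | (sg j == a) && (j != i)]|
  else ((sg i == a) && (y == x) : nat).
Proof.
rewrite ffunE /=; case: eqP => [->|/eqP y_neq0].
  apply: eq_card => j; rewrite !inE ffunE; case: (eqVneq j i) => [->|_].
    by rewrite (negbTE x_neq0) !andbF.
  by rewrite eqxx andbT.
case bad_a: ((sg i == a) && (y == x)).
  case/andP: bad_a => /eqP <- /eqP ->.
  rewrite (eq_card (B := pred1 i)) ?card1 // => j; rewrite !inE ffunE.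
  case: (eqVneq j i) => [->|_]; first by rewrite !eqxx.
  by rewrite [ord0 == x]eq_sym (negbTE x_neq0) andbF.
apply/eqP; rewrite cards_eq0; apply/eqP/setP => j; rewrite !inE ffunE.
case: (eqVneq j i) => [->|_]; last by rewrite [ord0 == y]eq_sym (negbTE y_neq0) andbF.
by rewrite [x == y]eq_sym bad_a.
Qed.

Definition single_occ (s : patternT) : occT := [ffun p =>
  if p.2 == ord0 then (if p.1 == z0 then inord (s z0).-1 else s p.1)
  else if (p.1 == z0) && (p.2 == x) then inord 1 else ord0].

Definition single_part (occ : occT) : patternT :=
  [ffun a => if a == z0 then inord (occ (z0, ord0)).+1 else occ (a, ord0)].

Lemma single_occE (s : patternT) a y : nat_of_ord (single_occ s (a, y)) =
  if y == ord0 then (if a == z0 then (s z0).-1 else s a)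
  else ((a == z0) && (y == x) : nat).
Proof.
rewrite ffunE /=; case: (y == ord0); case: (a == z0) => //=.
- by rewrite inordK // ltnS (leq_trans (leq_pred _)) // -ltnS.
- by case: (y == x) => //=; rewrite inordK // ltnS (n_gt0 z0).
Qed.

Lemma mode_count_single_occ (s : patternT) :
  (0 < s z0)%N -> forall a, mode_count (single_occ s) a = s a.
Proof.
move=> s_z0 a; rewrite /mode_count (bigD1 ord0) //= single_occE eqxx.
under eq_bigr => y y_neq0 do rewrite single_occE (negbTE y_neq0).
case: eqP => [->|_] /=; last by rewrite big1 ?addn0.
rewrite (bigD1 x) //= eqxx big1 ?addn0 => [|y /andP [_ /negbTE -> //]].
by rewrite addn1 prednK.
Qed.

Lemma single_occK (s : patternT) : (0 < s z0)%N -> single_part (single_occ s) = s.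
Proof.
move=> s_z0; apply/ffunP => a; apply: ord_inj; rewrite ffunE.
case: eqP => [->|/eqP a_neq]; last by rewrite single_occE eqxx (negbTE a_neq).
by rewrite single_occE !eqxx inordK prednK // -ltnS.
Qed.

Lemma single_occ_mode0_empty (s : patternT) :
  nat_of_ord (s z0) = 0%N -> single_part (single_occ s) != s.
Proof.
move=> s_z0; apply/eqP => /ffunP /(_ z0); rewrite ffunE eqxx => /(congr1 val) /=.
by rewrite s_z0 inordK // ltnS single_occE !eqxx s_z0; exact: n_gt0 z0.
Qed.

Lemma single_occ_error (s : patternT) : mode0_error (single_occ s).
Proof.
have x_val : nat_of_ord x != 0%N := x_neq0.
apply/existsP; exists (z0, x).
by rewrite /= z0E eqxx x_val single_occE (negbTE x_neq0) !eqxx.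
Qed.

Lemma pattern_fact_single_occ (s : patternT) : nat_of_ord (s z0) = 1%N ->
  (\prod_(p : 'I_n * 'I_l.+1) (single_occ s p : nat)`!)%N = pattern_fact (pattern_of s).
Proof.
move=> s_z0; rewrite prod_pair_fact; apply: eq_bigr => a _.
rewrite (bigD1 ord0) //= big1 ?muln1 => [|y y_neq0]; last first.
  by rewrite single_occE (negbTE y_neq0); case: ((a == z0) && (y == x)).
by rewrite single_occE eqxx /pattern_of; case: eqP => [->|//]; rewrite s_z0.
Qed.

Lemma amp_single_lab_occ (s : patternT) : (0 < s z0)%N ->
  amp U single_lab (single_occ s) = pattern_amp_from U z0 i (pattern_of s).
Proof.
move=> s_z0; apply: eq_bigl => sg; apply/eqP/andP => [occ_sg|[/forallP occ_s /eqP sg_i]].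
  have sg_i : sg i = z0.
    have /ffunP/(_ (z0, x)) := occ_sg.
    by rewrite config_single_lab ffunE /= single_occE (negbTE x_neq0) !eqxx; case: eqP.
  split; last by rewrite sg_i.
  by apply/forallP => a; rewrite -(mode_count_config occ_sg) mode_count_single_occ.
apply/ffunP => -[a y]; rewrite config_single_lab ffunE /= single_occE.
case: eqP => _; last by rewrite sg_i eq_sym.
rewrite occupancy_others sg_i (eqP (occ_s a)) [z0 == a]eq_sym.
by case: eqP => [->|_]; rewrite ?subn1 ?subn0.
Qed.

Lemma single_lab_route_error (sg : routeT) (occ : occT) :
  config single_lab sg = occ_nat occ -> mode0_error occ -> sg i = z0.
Proof.
move=> occ_sg /existsP [[a y] /and3P [/= a0 y_val occ_pos]].
have y_neq0 : y != ord0 := y_val.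
move: occ_pos; have -> : a = z0 by apply/eqP; rewrite -(val_eq0 z0E).
by rewrite (occ_config occ_sg) config_single_lab (negbTE y_neq0); case: eqP.
Qed.

Lemma error_weight_single_out (occ : occT) : single_occ (single_part occ) != occ ->
  (if success U occ && mode0_error occ then outcome_prob U single_lab occ else 0) = 0.
Proof.
move=> occ_out; case: ifP => // /andP [succ err].
have [|/amp_neq0_route [sg occ_sg]] := eqVneq (amp U single_lab occ) 0.
  exact: outcome_prob_amp0.
case/negP: occ_out; have sg_i := single_lab_route_error occ_sg err.
have occ_val := occ_config occ_sg.
have others0 : #|[set j | (sg j == z0) && (j != i)]| = 0%N.
  rewrite (success_route U z0E occ_sg) in succ.
  by rewrite occupancy_others (ideal_pattern_mode0 z0E succ) sg_i eqxx.
apply/eqP/ffunP => -[b w]; apply: ord_inj; rewrite single_occE occ_val config_single_lab.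
case: eqP => w0; last by rewrite sg_i eq_sym.
case: (eqVneq b z0) => [->|b_neq].
  by rewrite ffunE eqxx occ_val config_single_lab eqxx others0 inordK // ltnS (n_gt0 z0).
by rewrite ffunE (negbTE b_neq) occ_val config_single_lab eqxx.
Qed.

Lemma error_weight_single :
  \sum_(occ : occT | success U occ && mode0_error occ) outcome_prob U single_lab occ =
  \sum_(s : patternT | ideal_pattern U (pattern_of s))
    normsq (pattern_amp_from U z0 i (pattern_of s)) * (pattern_fact (pattern_of s))%:R.
Proof.
rewrite big_mkcond (big_retract (e := single_occ) (p := single_part)); last first.
  exact: error_weight_single_out.
rewrite big_mkcond [RHS]big_mkcond; apply: eq_bigr => s _.
have [s_z0|s_z0] := posnP (s z0).
  rewrite (negbTE (single_occ_mode0_empty s_z0)).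
  by case: ifP => // /(ideal_pattern_mode0 z0E); rewrite /pattern_of s_z0.
rewrite single_occK // !eqxx single_occ_error andbT /outcome_prob amp_single_lab_occ //.
have [->|amp_neq0] := eqVneq (pattern_amp_from U z0 i (pattern_of s)) 0.
  by rewrite normsq0 !mul0r !if_same.
have [sg [occ_s _]] : exists sg : routeT,
    (forall a, occupancy sg a = pattern_of s a) /\ sg i = z0.
  case/big_neq0_exists: amp_neq0 => sg /andP [/forallP occ_s /eqP sg_i] _.
  by exists sg; split=> // a; apply/eqP.
rewrite (success_pattern U z0E (mode_count_single_occ s_z0) (sum_pattern_route occ_s)).
by case: ifP => // /(ideal_pattern_mode0 z0E) s_z1; rewrite pattern_fact_single_occ.
Qed.

End SingleErrorInput.

Section TranslationSymmetry.
Variable R : realType.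
Local Notation C := (complex R).
Variables (n : nat) (U : 'M[C]_n) (z0 : 'I_n).
Hypothesis z0E : nat_of_ord z0 = 0%N.
Local Notation routeT := {ffun 'I_n -> 'I_n}.
Local Notation patternT := {ffun 'I_n -> 'I_n.+1}.

Lemma prod_route_occupancy (phase : 'I_n -> C) (sg : routeT) :
  \prod_(j < n) phase (sg j) = \prod_(a < n) phase a ^+ occupancy sg a.
Proof.
rewrite (partition_big sg xpredT) //=; apply: eq_bigr => a _.
rewrite (eq_bigr (fun _ => phase a)) => [|j /eqP -> //].
by rewrite prodr_const /occupancy cardsE.
Qed.

Section ColumnPermutation.
Variables (s : {perm 'I_n}) (phase : 'I_n -> C).
Hypothesis U_perm : forall a j, U a (s j) = U a j * phase a.

Definition route_perm (sg : routeT) : routeT := [ffun j => sg ((s^-1)%g j)].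

Lemma route_perm_bij : bijective route_perm.
Proof.
exists (fun sg : routeT => [ffun j => sg (s j)]) => sg;
  by apply/ffunP => j; rewrite !ffunE ?permK ?permKV.
Qed.

Lemma occupancy_route_perm sg a : occupancy (route_perm sg) a = occupancy sg a.
Proof.
rewrite /occupancy -(card_preimset _ (@perm_inj _ s)); apply: eq_card => j.
by rewrite !inE ffunE permK.
Qed.

Lemma route_amp_perm sg :
  route_amp U (route_perm sg) = route_amp U sg * \prod_(a < n) phase a ^+ occupancy sg a.
Proof.
rewrite /route_amp (reindex_inj (@perm_inj _ s)) /=.
under eq_bigr do rewrite ffunE permK U_perm.
by rewrite big_split /= prod_route_occupancy.
Qed.

Lemma pattern_amp_phase (f : 'I_n -> nat) :
  pattern_amp U f = (\prod_(a < n) phase a ^+ f a) * pattern_amp U f.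
Proof.
rewrite {1}/pattern_amp (reindex route_perm) /pattern_amp; last first.
  by case: route_perm_bij => g g1 g2; exists g => ? _.
rewrite mulr_sumr; apply: eq_big => sg.
  by apply: eq_forallb => a; rewrite occupancy_route_perm.
move=> /forallP occ_f; rewrite route_amp_perm mulrC; congr (_ * _).
by apply: eq_bigr => a _; rewrite -(occupancy_route_perm sg a) (eqP (occ_f a)).
Qed.

Lemma pattern_amp_from_phase (i : 'I_n) (f : 'I_n -> nat) : s z0 = i ->
  pattern_amp_from U z0 i f = (\prod_(a < n) phase a ^+ f a) * pattern_amp_from U z0 z0 f.
Proof.
move=> s_z0; rewrite {1}/pattern_amp_from (reindex route_perm) /pattern_amp_from; last first.
  by case: route_perm_bij => g g1 g2; exists g => ? _.
rewrite mulr_sumr; apply: eq_big => sg.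
  rewrite ffunE -s_z0 permK; congr andb.
  by apply: eq_forallb => a; rewrite occupancy_route_perm.
move=> /andP [/forallP occ_f _]; rewrite route_amp_perm mulrC; congr (_ * _).
by apply: eq_bigr => a _; rewrite -(occupancy_route_perm sg a) (eqP (occ_f a)).
Qed.

End ColumnPermutation.

Hypothesis U_translate : forall i : 'I_n, exists (s : {perm 'I_n}) (phase : 'I_n -> C),
  s z0 = i /\ forall a j, U a (s j) = U a j * phase a.

Lemma pattern_amp_from_const (f : 'I_n -> nat) i :
  pattern_amp U f != 0 -> pattern_amp_from U z0 i f = pattern_amp_from U z0 z0 f.
Proof.
move=> amp_neq0; have [s [phase [s_z0 U_perm]]] := U_translate i.
rewrite (pattern_amp_from_phase U_perm f s_z0).
suff -> : \prod_(a < n) phase a ^+ f a = 1 by rewrite mul1r.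
apply: (mulIf amp_neq0); rewrite mul1r.
by rewrite -(pattern_amp_phase U_perm).
Qed.

Lemma pattern_amp_sum_from (f : 'I_n -> nat) : f z0 = 1%N ->
  pattern_amp U f = \sum_(i < n) pattern_amp_from U z0 i f.
Proof.
move=> f_z0; rewrite /pattern_amp_from; under eq_bigr do rewrite big_mkcondr.
rewrite exchange_big /pattern_amp; apply: eq_bigr => sg /forallP occ_f.
rewrite -big_mkcond /= sumr_const.
by move: (eqP (occ_f z0)); rewrite f_z0 /occupancy cardsE => ->.
Qed.

Lemma pattern_amp_from0 (f : 'I_n -> nat) : f z0 = 1%N -> pattern_amp U f != 0 ->
  pattern_amp U f = n%:R * pattern_amp_from U z0 z0 f.
Proof.
move=> f_z0 amp_neq0; rewrite pattern_amp_sum_from //.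
under eq_bigr do rewrite pattern_amp_from_const //.
by rewrite sumr_const card_ord mulr_natl.
Qed.

Lemma success_weight_ideal_translate :
  \sum_(s : patternT | ideal_pattern U (pattern_of s))
    normsq (pattern_amp U (pattern_of s)) * (pattern_fact (pattern_of s))%:R =
  n%:R * \sum_(i < n) \sum_(s : patternT | ideal_pattern U (pattern_of s))
    normsq (pattern_amp_from U z0 i (pattern_of s)) * (pattern_fact (pattern_of s))%:R.
Proof.
rewrite exchange_big /= mulr_sumr; apply: eq_bigr => s s_ideal.
have amp_neq0 := ideal_pattern_amp_neq0 s_ideal.
rewrite (pattern_amp_from0 (ideal_pattern_mode0 z0E s_ideal) amp_neq0) normsqM normsq_natr.
under eq_bigr do rewrite (pattern_amp_from_const _ amp_neq0).
by rewrite sumr_const card_ord -mulr_natl; ring.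
Qed.

End TranslationSymmetry.

Lemma prod_if0 (V : comPzSemiRingType) (I : finType) (c : pred I) (u : I -> V) :
  \prod_j (if c j then u j else 0) = if [forall j, c j] then \prod_j u j else 0.
Proof.
case: ifP => [/forallP c_all|/negbT]; first by apply: eq_bigr => j _; rewrite c_all.
by rewrite negb_forall => /existsP [j0 /negbTE c_j0]; rewrite (bigD1 j0) //= c_j0 mul0r.
Qed.

Section IdealPatternExists.
Variable R : realType.
Local Notation C := (complex R).
Variables (n : nat) (U : 'M[C]_n) (z0 : 'I_n) (c0 : C).
Hypothesis z0E : nat_of_ord z0 = 0%N.
Hypothesis U_row0 : forall b, U z0 b = c0.
Hypothesis U_colsum : forall j, \sum_(a < n) U a j = if j == z0 then n%:R * c0 else 0.
Hypothesis c0_neq0 : c0 != 0.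
Hypothesis n_gt2 : (2 < n)%N.
Local Notation routeT := {ffun 'I_n -> 'I_n}.
Local Notation patternT := {ffun 'I_n -> 'I_n.+1}.

Definition only_to_mode0 (i : 'I_n) (sg : routeT) := [forall j, (sg j == z0) == (j == i)].

Lemma sum_route_amp_only_to_mode0 (i : 'I_n) :
  \sum_(sg : routeT | only_to_mode0 i sg) route_amp U sg =
  \prod_(j < n) (if j == i then c0 else \sum_(a < n) U a j - c0).
Proof.
have column_part j : (if j == i then c0 else \sum_(a < n) U a j - c0) =
    \sum_(a < n) (if (a == z0) == (j == i) then U a j else 0).
  rewrite -big_mkcond /=; case: (j == i).
    by rewrite (eq_bigl (fun a => a == z0)) ?big_pred1_eq ?U_row0 // => a; case: (a == z0).
  rewrite [RHS](eq_bigl (fun a => a != z0)); last by move=> a; case: (a == z0).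
  by rewrite [in LHS](bigD1 z0) //= U_row0 addrC addrK.
under [RHS]eq_bigr do rewrite column_part.
by rewrite bigA_distr_bigA /= big_mkcond; apply: eq_bigr => sg _; rewrite prod_if0.
Qed.

Let mode0_factor (i j : 'I_n) : C :=
  if j == i then c0 else (if j == z0 then n%:R * c0 else 0) - c0.

Lemma prod_mode0_factor_z0 : \prod_(j < n) mode0_factor z0 j = c0 * (- c0) ^+ n.-1.
Proof.
rewrite (bigD1 z0) //= /mode0_factor eqxx; congr (_ * _).
rewrite (eq_bigr (fun _ => - c0)) => [|j /negbTE ->]; last by rewrite sub0r.
by rewrite prodr_const cardC1 card_ord.
Qed.

Lemma prod_mode0_factor_neq i : i != z0 ->
  \prod_(j < n) mode0_factor i j = c0 * ((n%:R * c0 - c0) * (- c0) ^+ n.-2).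
Proof.
move=> i_neq; rewrite (bigD1 i) //= /mode0_factor eqxx; congr (_ * _).
rewrite (bigD1 z0) /=; last by rewrite eq_sym.
rewrite eq_sym (negbTE i_neq) eqxx; congr (_ * _).
rewrite (eq_bigr (fun _ => - c0)) => [|j /andP [/negbTE -> /negbTE ->]]; last by rewrite sub0r.
rewrite prodr_const; congr (_ ^+ _).
transitivity #|[predD1 predC1 i & z0]|; first by apply: eq_card => j; rewrite !inE andbC.
have := cardD1 z0 (predC1 i); rewrite cardC1 card_ord [z0 \in _]inE eq_sym i_neq add1n.
by move=> ->.
Qed.

Lemma sum_route_amp_single_mode0 :
  \sum_(i < n) \sum_(sg : routeT | only_to_mode0 i sg) route_amp U sg != 0.
Proof.
under eq_bigr do rewrite sum_route_amp_only_to_mode0.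
under eq_bigr do under eq_bigr do rewrite U_colsum.
rewrite (bigD1 z0) //= prod_mode0_factor_z0.
rewrite (eq_bigr (fun _ => c0 * ((n%:R * c0 - c0) * (- c0) ^+ n.-2))) => [|i]; last first.
  exact: prod_mode0_factor_neq.
rewrite sumr_const cardC1 card_ord.
have [k n_eq] : exists k, n = k.+3 by exists (n - 3)%N; lia.
rewrite n_eq /=.
have -> : c0 * (- c0) ^+ k.+2 + c0 * ((k.+3%:R * c0 - c0) * (- c0) ^+ k.+1) *+ k.+2
    = (- c0) ^+ k.+1 * c0 ^+ 2 * (k.+1%:R * k.+3%:R).
  by rewrite -mulr_natr -!natr1 !exprS; ring.
by rewrite !mulf_neq0 ?expf_neq0 ?oppr_eq0 ?pnatr_eq0.
Qed.

Lemma card_only_to_mode0 (sg : routeT) :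
  #|[pred i | only_to_mode0 i sg]| = (occupancy sg z0 == 1%N).
Proof.
have only_set i : only_to_mode0 i sg = ([set j | sg j == z0] == [set i]).
  apply/forallP/eqP => [sg_z0|sg_z0 j].
    by apply/setP => j; rewrite !inE; have /eqP := sg_z0 j.
  by apply/eqP; move/setP: sg_z0 => /(_ j); rewrite !inE.
rewrite /occupancy; case: cards1P => [[i0 sg_i0]|no_single].
  rewrite (eq_card (B := pred1 i0)) ?card1 // => i.
  by rewrite !inE only_set sg_i0 (inj_eq set1_inj) eq_sym.
apply: eq_card0 => i; rewrite !inE only_set; apply/negbTE/eqP => sg_i.
by apply: no_single; exists i.
Qed.

Definition occupancy_pattern (sg : routeT) : patternT := [ffun a => inord (occupancy sg a)].

Lemma occupancy_patternE (sg : routeT) a :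
  nat_of_ord (occupancy_pattern sg a) = occupancy sg a.
Proof. by rewrite ffunE inordK // ltnS occupancy_le. Qed.

Lemma ideal_pattern_exists : exists s : patternT, ideal_pattern U (pattern_of s).
Proof.
have := sum_route_amp_single_mode0.
have -> : \sum_(i < n) \sum_(sg : routeT | only_to_mode0 i sg) route_amp U sg =
    \sum_(sg : routeT | occupancy sg z0 == 1%N) route_amp U sg.
  under eq_bigr do rewrite big_mkcond /=.
  rewrite exchange_big /= [RHS]big_mkcond; apply: eq_bigr => sg _.
  by rewrite -big_mkcond /= sumr_const card_only_to_mode0; case: (_ == 1%N).
rewrite (partition_big occupancy_pattern (fun s : patternT => nat_of_ord (s z0) == 1%N)) /=;
  last by move=> sg; rewrite occupancy_patternE.
case/big_neq0_exists => s /eqP s_z0.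
have -> : \sum_(sg : routeT | (occupancy sg z0 == 1%N) && (occupancy_pattern sg == s))
    route_amp U sg = pattern_amp U (pattern_of s).
  apply: eq_bigl => sg; apply/andP/forallP => [[_ /eqP <-] a|occ_s].
    by rewrite /pattern_of occupancy_patternE.
  split; first by rewrite (eqP (occ_s z0)) /pattern_of s_z0.
  by apply/eqP/ffunP => a; apply: ord_inj; rewrite occupancy_patternE (eqP (occ_s a)).
move=> amp_neq0; exists s.
exact: ideal_patternP (pattern_amp_sum amp_neq0) s_z0 amp_neq0.
Qed.

Lemma success_weight_ideal_gt0 :
  0 < \sum_(s : patternT | ideal_pattern U (pattern_of s))
        normsq (pattern_amp U (pattern_of s)) * (pattern_fact (pattern_of s))%:R.
Proof.
have [s s_ideal] := ideal_pattern_exists.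
rewrite (bigD1 s) //= ltr_pwDl ?sumr_ge0 // => [|t _]; last by rewrite mulr_ge0 ?normsq_ge0.
rewrite mulr_gt0 ?ltr0n ?prodn_gt0 // => [|a]; last exact: fact_gt0.
by rewrite lt_def normsq_ge0 normsq_eq0 ideal_pattern_amp_neq0.
Qed.

End IdealPatternExists.

Lemma bernoulli_le (R : realDomainType) (e : R) k :
  0 <= e <= 1 -> 1 - k%:R * e <= (1 - e) ^+ k.
Proof.
case/andP=> e_ge0 e_le1; elim: k => [|k IH]; first by rewrite mul0r subr0 expr0.
rewrite exprS -natr1.
have : (1 - k%:R * e) * (1 - e) <= (1 - e) * (1 - e) ^+ k.
  by rewrite mulrC ler_wpM2l // subr_ge0.
have : 0 <= k%:R * e * e by rewrite !mulr_ge0.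
nra.
Qed.

Lemma dev_ratio_le (R : realFieldType) (nR x y e b0 M : R) :
  0 < nR -> 0 < b0 -> b0 / 2 <= y -> `|nR * x - e * y| <= M ->
  `|x / y - e / nR| <= 2 * M / (nR * b0).
Proof.
move=> nR_gt0 b0_gt0 y_ge dev_le.
have y_gt0 : 0 < y by apply: lt_le_trans y_ge; rewrite divr_gt0.
have M_ge0 : 0 <= M := le_trans (normr_ge0 _) dev_le.
have -> : x / y - e / nR = (nR * x - e * y) / (nR * y).
  by field; rewrite !gt_eqF.
rewrite normrM normfV (gtr0_norm (mulr_gt0 nR_gt0 y_gt0)) ler_pdivrMr ?mulr_gt0 //.
apply: le_trans dev_le _.
have -> : 2 * M / (nR * b0) * (nR * y) = 2 * M * y / b0 by field; rewrite !gt_eqF.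
by rewrite ler_pdivlMr //; nra.
Qed.

Lemma dev_numer_le (R : realFieldType) (nR b0 A At Bt e p r1 r2 : R) :
  0 <= nR -> 0 <= b0 -> 0 <= e -> 0 <= p <= 1 ->
  0 <= r1 <= e ^+ 2 * At -> 0 <= r2 <= e * Bt -> b0 = nR * A ->
  `|nR * (e * p * A + r1) - e * (p * (1 - e) * b0 + r2)| <= e ^+ 2 * (b0 + nR * At + Bt).
Proof.
move=> nR_ge0 b0_ge0 e_ge0 /andP[p_ge0 p_le1] /andP[r1_ge0 r1_le] /andP[r2_ge0 r2_le] b0E.
have -> : nR * (e * p * A + r1) - e * (p * (1 - e) * b0 + r2) =
    e ^+ 2 * p * b0 + nR * r1 - e * r2 by rewrite b0E; ring.
have e2_ge0 : 0 <= e ^+ 2 := sqr_ge0 e.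
have er2_le : e * r2 <= e ^+ 2 * Bt by rewrite expr2 -mulrA ler_wpM2l.
have At_ge0 : 0 <= e ^+ 2 * At := le_trans r1_ge0 r1_le.
have Bt_ge0 : 0 <= e ^+ 2 * Bt by apply: le_trans er2_le; rewrite mulr_ge0.
have pb0_ge0 : 0 <= e ^+ 2 * p * b0 by rewrite !mulr_ge0.
have pb0_le : e ^+ 2 * p * b0 <= e ^+ 2 * b0.
  by rewrite -mulrA ler_wpM2l // -[X in _ <= X]mul1r ler_wpM2r.
have nr1_ge0 : 0 <= nR * r1 by rewrite mulr_ge0.
have nr1_le : nR * r1 <= e ^+ 2 * (nR * At) by rewrite mulrCA ler_wpM2l.
have er2_ge0 : 0 <= e * r2 by rewrite mulr_ge0.
have e2b0_ge0 : 0 <= e ^+ 2 * b0 by rewrite mulr_ge0.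
rewrite ler_norml !mulrDr; apply/andP; split; lra.
Qed.

Section ErrorModel.
Variable R : realType.
Variables (n l : nat) (pi : 'I_n -> 'I_l.+1 -> R).
Local Notation labT := {ffun 'I_n -> 'I_l.+1}.

Definition error_dist (eps : R) (i : 'I_n) (x : 'I_l.+1) : R :=
  if x == ord0 then 1 - eps else eps * pi i x.

Definition num_errors (lab : labT) : nat := #|[set j | lab j != ord0]|.

Lemma num_errors_eq0 (lab : labT) : num_errors lab = 0%N -> lab = ideal_lab n l.
Proof.
move/eqP; rewrite cards_eq0 => /eqP no_err; apply/ffunP => j; rewrite ffunE.
by apply/eqP; apply: contraT => err_j; have := in_set0 j; rewrite -no_err inE err_j.
Qed.

Lemma num_errors_single (i : 'I_n) (x : 'I_l.+1) : num_errors (single_lab i x) = (x != ord0).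
Proof.
rewrite /num_errors; case: eqP => [->|/eqP x_neq0].
  by apply/eqP; rewrite cards_eq0; apply/eqP/setP => j; rewrite !inE ffunE; case: ifP.
rewrite (eq_card (B := pred1 i)) ?card1 // => j; rewrite !inE ffunE.
by case: (j == i); rewrite ?x_neq0 ?eqxx.
Qed.

Lemma num_errors1_single (lab : labT) (i : 'I_n) :
  num_errors lab = 1%N -> lab i != ord0 -> lab = single_lab i (lab i).
Proof.
move=> /eqP /cards1P [k lab_k] err_i; apply/ffunP => j; rewrite ffunE.
have err_iff j' : (lab j' != ord0) = (j' == k) by move/setP: lab_k => /(_ j'); rewrite !inE.
have i_k : i = k by apply/eqP; rewrite -err_iff.
case: (eqVneq j i) => [->//|j_neq].
by apply/eqP; move: (err_iff j); rewrite -i_k (negbTE j_neq) => /negbFE.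
Qed.

Lemma sum_num_errors1 (G : labT -> R) :
  \sum_(lab : labT | num_errors lab == 1%N) G lab =
  \sum_(i < n) \sum_(x < l.+1 | x != ord0) G (single_lab i x).
Proof.
rewrite (eq_bigr (fun lab : labT => \sum_(i < n | lab i != ord0) G lab)); last first.
  by move=> lab /eqP num1; rewrite sumr_const -cardsE -/(num_errors lab) num1.
rewrite (exchange_big_dep xpredT) //=; apply: eq_bigr => i _.
rewrite (reindex_onto (single_lab i) (fun lab : labT => lab i)); last first.
  by move=> lab /andP [/eqP num1 err_i]; rewrite -num_errors1_single.
apply: eq_bigl => x; rewrite num_errors_single ffunE !eqxx andbT.
by case: (x != ord0).
Qed.

Hypothesis pi_ge0 : forall i x, 0 <= pi i x.
Hypothesis pi_sum : forall i, \sum_(x < l.+1 | x != ord0) pi i x = 1.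

Lemma pi_le1 i x : x != ord0 -> pi i x <= 1.
Proof.
move=> x_neq0; rewrite -(pi_sum i) (bigD1 x) //= lerDl.
by apply: sumr_ge0 => y _; apply: pi_ge0.
Qed.

Section SmallError.
Variable eps : R.
Hypothesis eps_gt0 : 0 < eps.
Hypothesis eps_le1 : eps <= 1.

Lemma error_dist_ge0 i x : 0 <= error_dist eps i x.
Proof. by rewrite /error_dist; case: ifP => _; rewrite ?subr_ge0 // mulr_ge0 // ltW. Qed.

Lemma error_dist_bad_le i x : x != ord0 -> error_dist eps i x <= eps.
Proof.
move=> x_neq0; rewrite /error_dist (negbTE x_neq0) -[X in _ <= X]mulr1.
by rewrite ler_wpM2l ?(ltW eps_gt0) ?pi_le1.
Qed.

Lemma error_dist_le1 i x : error_dist eps i x <= 1.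
Proof.
have [->|x_neq0] := eqVneq x ord0; first by rewrite /error_dist eqxx lerBlDr lerDl ltW.
exact: le_trans (error_dist_bad_le i x_neq0) eps_le1.
Qed.

Lemma prod_error_dist_ge0 (P : pred 'I_n) (lab : labT) :
  0 <= \prod_(j < n | P j) error_dist eps j (lab j).
Proof. by apply: prodr_ge0 => j _; apply: error_dist_ge0. Qed.

Lemma prod_error_dist_le1 (P : pred 'I_n) (lab : labT) :
  \prod_(j < n | P j) error_dist eps j (lab j) <= 1.
Proof. by apply: prodr_ile1 => j _; rewrite error_dist_ge0 error_dist_le1. Qed.

Lemma input_weight_ideal : input_weight (error_dist eps) (ideal_lab n l) = (1 - eps) ^+ n.
Proof.
rewrite /input_weight (eq_bigr (fun _ => 1 - eps)) ?prodr_const ?card_ord // => j _.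
by rewrite ffunE /error_dist eqxx.
Qed.

Lemma input_weight_single i x : x != ord0 ->
  input_weight (error_dist eps) (single_lab i x) = eps * pi i x * (1 - eps) ^+ n.-1.
Proof.
move=> x_neq0; rewrite /input_weight (bigD1 i) //= ffunE eqxx /error_dist (negbTE x_neq0).
rewrite (eq_bigr (fun _ => 1 - eps)) => [|j /negbTE j_neq]; last by rewrite ffunE j_neq eqxx.
by rewrite prodr_const cardC1 card_ord.
Qed.

Lemma input_weight_le_eps (lab : labT) : lab != ideal_lab n l ->
  input_weight (error_dist eps) lab <= eps.
Proof.
move=> lab_neq; have [j err_j] : exists j, lab j != ord0.
  apply/existsP; apply: contraR lab_neq; rewrite negb_exists => /forallP no_err.
  by apply/eqP/ffunP => j; rewrite ffunE; apply/eqP/negPn/no_err.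
rewrite /input_weight (bigD1 j) //= -[X in _ <= X]mulr1.
by rewrite ler_pM ?error_dist_ge0 ?prod_error_dist_ge0 ?error_dist_bad_le ?prod_error_dist_le1.
Qed.

Lemma input_weight_le_eps2 (lab : labT) : num_errors lab != 1%N -> lab != ideal_lab n l ->
  input_weight (error_dist eps) lab <= eps ^+ 2.
Proof.
move=> num_neq1 lab_neq.
have : (1 < num_errors lab)%N.
  case: ltngtP num_neq1 => // num_lt _.
  move: num_lt; rewrite ltnS leqn0 => /eqP /num_errors_eq0 lab_eq.
  by rewrite lab_eq eqxx in lab_neq.
case/card_gt1P => j1 [j2 [err_j1 err_j2 j_neq]]; rewrite !inE in err_j1 err_j2.
rewrite /input_weight (bigD1 j1) //= (bigD1 j2) /=; last by rewrite eq_sym.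
rewrite expr2 mulrA -[X in _ <= X]mulr1.
rewrite ler_pM ?mulr_ge0 ?error_dist_ge0 ?prod_error_dist_ge0 ?prod_error_dist_le1 //.
by rewrite ler_pM ?error_dist_ge0 ?error_dist_bad_le.
Qed.

End SmallError.

Section Ratio.
Variables (a b : labT -> R) (alpha : 'I_n -> R).
Hypothesis n_gt0 : (0 < n)%N.
Hypothesis a_ge0 : forall lab, 0 <= a lab.
Hypothesis b_ge0 : forall lab, 0 <= b lab.
Hypothesis a_ideal : a (ideal_lab n l) = 0.
Hypothesis a_single : forall i x, x != ord0 -> a (single_lab i x) = alpha i.
Hypothesis b_ideal : b (ideal_lab n l) = n%:R * \sum_(i < n) alpha i.
Hypothesis b_ideal_gt0 : 0 < b (ideal_lab n l).

Lemma weighted_error_decomp eps : 0 < eps -> eps <= 1 -> exists r1,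
  \sum_(lab : labT) input_weight (error_dist eps) lab * a lab =
    eps * (1 - eps) ^+ n.-1 * \sum_(i < n) alpha i + r1
  /\ 0 <= r1 <= eps ^+ 2 * \sum_(lab : labT) a lab.
Proof.
move=> eps_gt0 eps_le1.
exists (\sum_(lab : labT | num_errors lab != 1%N) input_weight (error_dist eps) lab * a lab).
split.
  rewrite (bigID (fun lab => num_errors lab == 1%N)) /=; congr (_ + _).
  rewrite sum_num_errors1 mulr_sumr; apply: eq_bigr => i _.
  rewrite (eq_bigr (fun x => eps * (1 - eps) ^+ n.-1 * alpha i * pi i x)).
    by rewrite -mulr_sumr pi_sum mulr1.
  by move=> x x_neq0; rewrite input_weight_single // a_single //; ring.
apply/andP; split.
  by apply: sumr_ge0 => lab _; rewrite mulr_ge0 ?prod_error_dist_ge0.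
rewrite mulr_sumr [X in _ <= X](bigID (fun lab => num_errors lab != 1%N)) /=.
rewrite -[X in X <= _]addr0 lerD //; last first.
  by apply: sumr_ge0 => lab _; rewrite mulr_ge0 ?sqr_ge0.
apply: ler_sum => lab num_neq1.
have [->|lab_neq] := eqVneq lab (ideal_lab n l); first by rewrite a_ideal !mulr0.
by rewrite ler_wpM2r // input_weight_le_eps2.
Qed.

Lemma weighted_success_decomp eps : 0 < eps -> eps <= 1 -> exists r2,
  \sum_(lab : labT) input_weight (error_dist eps) lab * b lab =
    (1 - eps) ^+ n * b (ideal_lab n l) + r2
  /\ 0 <= r2 <= eps * \sum_(lab : labT) b lab.
Proof.
move=> eps_gt0 eps_le1.
exists (\sum_(lab : labT | lab != ideal_lab n l) input_weight (error_dist eps) lab * b lab).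
split; first by rewrite (bigD1 (ideal_lab n l)) //= input_weight_ideal.
apply/andP; split.
  by apply: sumr_ge0 => lab _; rewrite mulr_ge0 ?prod_error_dist_ge0.
rewrite mulr_sumr [X in _ <= X](bigD1 (ideal_lab n l)) //=.
rewrite -[X in X <= _]add0r lerD //; first by rewrite mulr_ge0 // ltW.
by apply: ler_sum => lab lab_neq; rewrite ler_wpM2r // input_weight_le_eps.
Qed.

Lemma weighted_ratio_asymptotics : exists K delta : R, 0 < delta /\
  forall eps : R, 0 < eps < delta ->
  `| (\sum_(lab : labT) input_weight (error_dist eps) lab * a lab)
     / (\sum_(lab : labT) input_weight (error_dist eps) lab * b lab) - eps / n%:R |
  <= K * eps ^+ 2.
Proof.
set b0 := b (ideal_lab n l).
set M := b0 + n%:R * \sum_(lab : labT) a lab + \sum_(lab : labT) b lab.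
have n_ge1 : 1 <= (n%:R : R) by rewrite ler1n.
exists (2 * M / (n%:R * b0)), (2 * n%:R)^-1.
split=> [|eps /andP [eps_gt0 eps_lt]]; first by rewrite invr_gt0 mulr_gt0 ?ltr0n.
have neps_le : n%:R * eps <= 2^-1.
  by move: eps_lt; rewrite invfM ltr_pdivlMr ?ltr0n // mulrC => /ltW.
have eps_le1 : eps <= 1 by nra.
have [r1 [-> r1_bd]] := weighted_error_decomp eps_gt0 eps_le1.
have [r2 [-> r2_bd]] := weighted_success_decomp eps_gt0 eps_le1.
set p := (1 - eps) ^+ n.-1.
have p_bd : 0 <= p <= 1 by rewrite exprn_ge0 ?exprn_ile1 ?subr_ge0 // lerBlDr lerDl ltW.
have pow_n : (1 - eps) ^+ n = p * (1 - eps) by rewrite -exprSr prednK.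
have half_le : 2^-1 <= p * (1 - eps).
  rewrite -pow_n; apply: le_trans (bernoulli_le _ _); first by lra.
  by rewrite ltW //=; lra.
rewrite pow_n -/b0.
have -> : 2 * M / (n%:R * b0) * eps ^+ 2 = 2 * (eps ^+ 2 * M) / (n%:R * b0) by ring.
apply: dev_ratio_le; rewrite ?ltr0n //.
  have : 2^-1 * b0 <= p * (1 - eps) * b0 by rewrite ler_wpM2r // ltW.
  by case/andP: r2_bd; lra.
exact: dev_numer_le (ler0n _ _) (ltW b_ideal_gt0) (ltW eps_gt0) p_bd r1_bd r2_bd b_ideal.
Qed.

End Ratio.

End ErrorModel.

Section FourierDistillation.
Variable R : realType.
Local Notation C := (complex R).
Variable ns : seq nat.
Hypothesis ns_ge2 : all (fun m => 2 <= m)%N ns.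
Hypothesis N_gt2 : (2 < modes ns)%N.
Local Notation N := (modes ns).
Local Notation U := (fourier_tensor R ns).

Let ns_gt0 : all (fun m => 0 < m)%N ns.
Proof. by apply: sub_all ns_ge2 => m /ltnW. Qed.

Let mode0 : 'I_N := Ordinal (ltnW (ltnW N_gt2)).

Lemma fourier_tensor_row0 b : U mode0 b = row0_entry R ns.
Proof. by rewrite fourier_tensorE tensor_entry_row0. Qed.

Lemma fourier_tensor_colsum j :
  \sum_(a < N) U a j = if j == mode0 then N%:R * row0_entry R ns else 0.
Proof.
rewrite (eq_bigr (fun a : 'I_N => tensor_entry R ns a j)) => [|a _].
  by rewrite sum_tensor_entry.
exact: fourier_tensorE.
Qed.

Lemma fourier_tensor_translate (i : 'I_N) :
  exists (s : {perm 'I_N}) (phase : 'I_N -> C),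
    s mode0 = i /\ forall a j, U a (s j) = U a j * phase a.
Proof.
pose shift (j : 'I_N) : 'I_N := Ordinal (radix_add_lt i j ns_gt0).
have shift_inj : injective shift.
  move=> j j' /(congr1 val) /= eq_add; apply: ord_inj.
  exact: radix_add_inj ns_gt0 (ltn_ord j) (ltn_ord j') eq_add.
exists (perm shift_inj), (radix_char R ns i); split.
  by apply: ord_inj; rewrite permE /= radix_add0.
by move=> a j; rewrite permE !fourier_tensorE /= tensor_entry_radix_add.
Qed.

Lemma fourier_error_rate l (pi : 'I_N -> 'I_l.+1 -> R) :
  (forall i x, 0 <= pi i x) -> (forall i, \sum_(x < l.+1 | x != ord0) pi i x = 1) ->
  exists K delta : R, 0 < delta /\ forall eps : R, 0 < eps < delta ->
    `| error_rate U (error_dist pi eps) - eps / N%:R | <= K * eps ^+ 2.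
Proof.
move=> pi_ge0 pi_sum; have mode0E : nat_of_ord mode0 = 0%N by [].
pose a (lab : {ffun 'I_N -> 'I_l.+1}) :=
  \sum_(occ | success U occ && mode0_error occ) outcome_prob U lab occ.
pose b (lab : {ffun 'I_N -> 'I_l.+1}) := \sum_(occ | success U occ) outcome_prob U lab occ.
pose alpha i := \sum_(s : {ffun 'I_N -> 'I_N.+1} | ideal_pattern U (pattern_of s))
  normsq (pattern_amp_from U mode0 i (pattern_of s)) * (pattern_fact (pattern_of s))%:R.
have a_ge0 lab : 0 <= a lab by apply: sumr_ge0 => occ _; apply: outcome_prob_ge0.
have b_ge0 lab : 0 <= b lab by apply: sumr_ge0 => occ _; apply: outcome_prob_ge0.
have a_single i x : x != ord0 -> a (single_lab i x) = alpha i.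
  exact: error_weight_single.
have b_ideal : b (ideal_lab N l) = N%:R * \sum_(i < N) alpha i.
  rewrite /b (success_weight_ideal U mode0E).
  exact: success_weight_ideal_translate mode0E fourier_tensor_translate.
have b_ideal_gt0 : 0 < b (ideal_lab N l).
  rewrite /b (success_weight_ideal U mode0E).
  exact: success_weight_ideal_gt0 mode0E fourier_tensor_row0 fourier_tensor_colsum
    (row0_entry_neq0 R ns_gt0) N_gt2.
have := weighted_ratio_asymptotics pi_ge0 pi_sum (n_gt0 mode0) a_ge0 b_ge0
  (error_weight_ideal U l) a_single b_ideal b_ideal_gt0.
exact.
Qed.

End FourierDistillation.

Definition urs_pi (R : realType) (n Rp : nat) (i : 'I_n) (x : 'I_Rp.+1) : R := Rp%:R^-1.

Lemma urs_pi_sum (R : realType) n Rp (i : 'I_n) : (1 <= Rp)%N ->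
  \sum_(x < Rp.+1 | x != ord0) @urs_pi R n Rp i x = 1.
Proof.
move=> Rp_ge1; rewrite /urs_pi sumr_const cardC1 card_ord /= -[_ *+ Rp]mulr_natr.
by rewrite mulVf // pnatr_eq0 -lt0n.
Qed.

Lemma urs_distE (R : realType) n Rp (eps : R) :
  urs_dist Rp eps = error_dist (@urs_pi R n Rp) eps.
Proof. by []. Qed.

Definition obb_pi (R : realType) (n : nat) (i : 'I_n) (x : 'I_n.+1) : R :=
  if nat_of_ord x == (nat_of_ord i).+1 then 1 else 0.

Lemma obb_pi_sum (R : realType) n (i : 'I_n) :
  \sum_(x < n.+1 | x != ord0) @obb_pi R n i x = 1.
Proof.
have i1_lt : ((nat_of_ord i).+1 < n.+1)%N by rewrite ltnS.
rewrite (bigD1 (Ordinal i1_lt)) //= /obb_pi eqxx big1 ?addr0 // => x /andP [_ x_neq].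
by case: eqP => // x_i1; case/eqP: x_neq; apply: ord_inj.
Qed.

Lemma obb_distE (R : realType) n (eps : R) :
  obb_dist eps = error_dist (@obb_pi R n) eps.
Proof.
apply: boolp.funext => i; apply: boolp.funext => x.
rewrite /obb_dist /error_dist /obb_pi [x == ord0]/eq_op /=.
by case: ifP => // _; case: ifP; rewrite ?mulr1 ?mulr0.
Qed.

Theorem theorem1 (R : realType) (ns : seq nat) :
  all (fun m => 2 <= m)%N ns ->
  (2 < \prod_(m <- ns) m)%N ->
  (forall Rp : nat, (1 <= Rp)%N ->
     exists K delta : R, 0 < delta /\
       forall eps : R, 0 < eps < delta ->
         `| error_rate (fourier_tensor R ns) (urs_dist Rp eps)
            - eps / (\prod_(m <- ns) m)%N%:R | <= K * eps ^+ 2)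
  /\
  (exists K delta : R, 0 < delta /\
       forall eps : R, 0 < eps < delta ->
         `| error_rate (fourier_tensor R ns) (obb_dist eps)
            - eps / (\prod_(m <- ns) m)%N%:R | <= K * eps ^+ 2).
Proof.
move=> ns_ge2 N_gt2; split=> [Rp Rp_ge1|].
  have urs_ge0 i x : 0 <= @urs_pi R (modes ns) Rp i x by rewrite /urs_pi invr_ge0.
  have [K [delta [delta_gt0 rate]]] :=
    fourier_error_rate ns_ge2 N_gt2 urs_ge0 (fun i => urs_pi_sum R i Rp_ge1).
  by exists K, delta; split=> // eps; rewrite urs_distE; apply: rate.
have obb_ge0 i x : 0 <= @obb_pi R (modes ns) i x by rewrite /obb_pi; case: ifP.
have [K [delta [delta_gt0 rate]]] :=
  fourier_error_rate ns_ge2 N_gt2 obb_ge0 (@obb_pi_sum R _).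
by exists K, delta; split=> // eps; rewrite obb_distE; apply: rate.
Qed.
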